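(* Let $T$ be a forest, $A\in\mathcal R(T)$ and $c\ge1$. If $T_1,\dots,T_c$ are mutually independent subtrees of $T$ and $A[T_i]$ is invertible for each $i\in[c]$, then $$\mathrm{nullity}(A)\le P\bigl(T\setminus(T_1\cup\dots\cup T_c)\bigr).$$
   Context: For a forest $T$ with vertices identified with $\{1,\dots,n\}$, $\mathcal R(T)$ is the set of real $n\times n$ matrices $A=(a_{ij})$ with $a_{ij}\ne0$ iff $\{i,j\}\in E(T)$ for $i\neq j$, and $a_{ij}a_{ji}>0$ on every edge; diagonal entries arbitrary. $A[T_i]$ is the principal submatrix indexed by $V(T_i)$. Two subtrees $T_1,T_2$ of $T$ are independent if no edge of $T$ joins a vertex of $T_1$ to a vertex of $T_2$. A path cover of a graph $G$ is a set of vertex-disjoint induced paths whose vertex sets cover $V(G)$; $P(G)$, the path cover number, is the minimum number of paths in a path cover. $T\setminus(T_1\cup\dots\cup T_c)$ is the induced subgraph on the remaining vertices. *)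

From mathcomp Require Import all_boot all_order all_algebra.
Set Implicit Arguments. Unset Strict Implicit. Unset Printing Implicit Defensive.
Import Order.TTheory GRing.Theory Num.Theory.
Local Open Scope ring_scope.

Definition is_forest (n : nat) (e : rel 'I_n) : Prop :=
  [/\ symmetric e, irreflexive e &
      ~ (exists s : seq 'I_n, [/\ uniq s, (3 <= size s)%N & cycle e s])].

Definition induced_rel (n : nat) (e : rel 'I_n) (X : {set 'I_n}) : rel 'I_n :=
  fun u v => [&& e u v, u \in X & v \in X].

Definition is_subtree (n : nat) (e : rel 'I_n) (X : {set 'I_n}) : Prop :=
  X != set0 /\ {in X &, forall x y, connect (induced_rel e X) x y}.

Definition independent (n : nat) (e : rel 'I_n) (X Y : {set 'I_n}) : Prop :=
  forall x y, x \in X -> y \in Y -> ~~ e x y.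

Definition induces_path (n : nat) (e : rel 'I_n) (X : {set 'I_n}) : bool :=
  [exists t : (#|X|).-tuple 'I_n,
    [&& uniq t, X == [set x in t] &
        [forall x in X, forall y in X,
          e x y == ((index y t == (index x t).+1) || (index x t == (index y t).+1))]]].

Definition is_path_cover (n : nat) (e : rel 'I_n) (S : {set 'I_n})
    (Q : {set {set 'I_n}}) : bool :=
  partition Q S && [forall B in Q, induces_path e B].

(* path cover number: minimum size of a path cover (#|S| is always attained
   by the cover by singletons, so it serves as the default of the min;
   for S empty this gives 0) *)
Definition path_cover_number (n : nat) (e : rel 'I_n) (S : {set 'I_n}) : nat :=
  \big[minn/#|S|]_(Q : {set {set 'I_n}} | is_path_cover e S Q) #|Q|.

Definition principal_submx (R : Type) (n : nat) (A : 'M[R]_n) (X : {set 'I_n})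
  : 'M[R]_(#|X|) :=
  \matrix_(i < #|X|, j < #|X|) A (enum_val i) (enum_val j).

Definition in_RT (R : realFieldType) (n : nat) (e : rel 'I_n) (A : 'M[R]_n) : Prop :=
  (forall i j, i != j -> (A i j != 0) = e i j) /\
  (forall i j, e i j -> 0 < A i j * A j i).

Definition nullity (R : fieldType) (n : nat) (A : 'M[R]_n) : nat := (n - \rank A)%N.

From mathcomp Require Import all_boot all_order all_algebra.
From mathcomp Require Import zify ring.
Import GRing.Theory Num.Theory.
Local Open Scope ring_scope.
Set Implicit Arguments. Unset Strict Implicit. Unset Printing Implicit Defensive.

(* Let U be the union of the T_i and W = ~: U.

   Write K_V(M) for the left kernel of the principal submatrix M[V], viewed as
   row vectors supported on V.  The heart of the proof (section Induction) is:
   if M[U] is invertible, U is contained in V, and F is a set of edges inside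
   V \ U in which every vertex lies on at most two edges, then K_V(M) is
   determined by its coordinates on some Z with |Z| + |F| <= |V \ U|.  It is
   proved by induction on |V|: V has a leaf t (section Leaves), and according
   to whether t is in U, lies on an edge {t, s} of F, and has a zero pivot
   M t t, one deletes t, deletes t and s, or eliminates t by a Schur
   complement (section Kernels).  Each reduction maps K_V(M) injectively into
   the kernel of the smaller instance and preserves the invertibility on U.

   Taking V = all vertices gives nullity A + |F| <= |W|.  The matrix A[U] is
   invertible since it is block diagonal with blocks A[T_i] (section Blocks),
   and the edges F of the paths of a path cover Q of W satisfy
   |W| <= |Q| + |F| (section PathCovers), whence nullity A <= |Q|. *)

Section Leaves.
Variables (n : nat) (e : rel 'I_n).
Hypotheses (e_sym : symmetric e) (e_irr : irreflexive e)
  (no_cycle : ~ (exists s : seq 'I_n, [/\ uniq s, (3 <= size s)%N & cycle e s])).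

Definition is_leaf_in (V : {set 'I_n}) (t : 'I_n) : Prop :=
  forall a b, a \in V -> b \in V -> e t a -> e t b -> a = b.

(* On a simple path x :: p, x is adjacent to no vertex of p but the next one:
   such a chord would close a cycle. *)
Lemma path_no_chord x p a : uniq (x :: p) -> path e x p -> a \in p ->
  a != head x p -> ~~ e x a.
Proof.
move=> U P ap ah; apply/negP=> exa; case/splitPr: ap U P ah => p1 p2 U P ah.
apply: no_cycle; exists (x :: rcons p1 a); split.
- have -> : x :: rcons p1 a = take (size p1).+2 (x :: p1 ++ a :: p2).
    by rewrite /= take_cat ltnNge leqnSn /= subSnn /= -cats1 take0.
  exact: take_uniq.
- case: p1 {U P} ah => [|y p1] /=; first by rewrite eqxx.
  by rewrite size_rcons.
- rewrite /= rcons_path last_rcons (e_sym a x) exa andbT.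
  by move: P; rewrite cat_path -cats1 cat_path /= => /andP[-> /andP[-> _]].
Qed.

Lemma leaf_or_extend (V : {set 'I_n}) x p : uniq (x :: p) -> path e x p ->
  is_leaf_in V x \/ exists2 c, c \in V & e x c && (c \notin x :: p).
Proof.
move=> U P.
have [/exists_inP[c cV H]|] := boolP [exists c in V, e x c && (c \notin x :: p)].
  by right; exists c.
rewrite negb_exists_in => /forall_inP H; left=> a b aV bV xa xb.
have in_p y : y \in V -> e x y -> y \in p.
  move=> yV xy; have := H y yV; rewrite xy /= negbK inE => /orP[/eqP yx|//].
  by move: xy; rewrite yx e_irr.
apply/eqP; apply/negPn/negP => ab.
have [ah|ah] := eqVneq a (head x p).
- have bh : b != head x p by rewrite -ah eq_sym.
  by have /negP := path_no_chord U P (in_p b bV xb) bh.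
- by have /negP := path_no_chord U P (in_p a aV xa) ah.
Qed.

(* Extending a simple path inside V as long as possible ends at a leaf. *)
Lemma leaf_exists (V : {set 'I_n}) : V != set0 -> exists2 t, t \in V & is_leaf_in V t.
Proof.
case/set0Pn=> x0 x0V.
suff: forall k x p, (n - size (x :: p) <= k)%N -> x \in V ->
   uniq (x :: p) -> path e x p -> exists2 t, t \in V & is_leaf_in V t.
  by move/(_ n x0 [::]); apply=> //; rewrite leq_subr.
elim=> [|k IH] x p Hk xV U P; have [L|[c cV /andP[xc cp]]] := leaf_or_extend V U P;
  try by exists x.
- have U' : uniq (c :: x :: p) by rewrite cons_uniq cp U.
  have := max_card (mem (c :: x :: p)); rewrite (card_uniqP U') card_ord /=.
  by move: Hk => /=; lia.
- apply: (IH c (x :: p)) => //=; first by move: Hk => /=; lia.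
  + by rewrite cp; move: U => /= ->.
  + by rewrite (e_sym c x) xc P.
Qed.
End Leaves.

Section Kernels.
Variables (R : fieldType) (n : nat) (e : rel 'I_n).
Hypotheses (e_sym : symmetric e) (e_irr : irreflexive e).

Definition has_pattern (M : 'M[R]_n) : Prop :=
  forall i j, i != j -> (M i j != 0) = e i j.

Definition in_kernel_on (V : {set 'I_n}) (M : 'M[R]_n) (x : 'rV[R]_n) : Prop :=
  (forall i, i \notin V -> x 0 i = 0) /\ (forall v, v \in V -> (x *m M) 0 v = 0).

Definition kernel_trivial (U : {set 'I_n}) (M : 'M[R]_n) : Prop :=
  forall x, in_kernel_on U M x -> x = 0.

Definition unit_row (t : 'I_n) : 'rV[R]_n := delta_mx 0 t.

Definition zero_at (t : 'I_n) (x : 'rV[R]_n) : 'rV[R]_n := x + (- x 0 t) *: unit_row t.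

Definition sole_neighbour (V : {set 'I_n}) (t s : 'I_n) : Prop :=
  forall j, j \in V -> e t j -> j = s.

Lemma sum_supported1 (F : 'I_n -> R) a :
  (forall j, j != a -> F j = 0) -> \sum_j F j = F a.
Proof. by move=> H; rewrite (bigD1 a) //= big1 ?addr0 // => j /H. Qed.

Lemma sum_supported2 (F : 'I_n -> R) a b : a != b ->
  (forall j, j != a -> j != b -> F j = 0) -> \sum_j F j = F a + F b.
Proof.
move=> ab H; rewrite (bigD1 a) //= (bigD1 b) 1?eq_sym //= big1 ?addr0 //.
by move=> j /andP[ja jb]; apply: H.
Qed.

Lemma row_mulE (x : 'rV[R]_n) (M : 'M[R]_n) v : (x *m M) 0 v = \sum_j x 0 j * M j v.
Proof. by rewrite mxE. Qed.

Lemma add_unit_rowE (x : 'rV[R]_n) c t j :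
  (x + c *: unit_row t) 0 j = x 0 j + c * (j == t)%:R.
Proof. by rewrite !mxE eqxx. Qed.

Lemma mul_add_unit_row (x : 'rV[R]_n) c t (M : 'M[R]_n) v :
  ((x + c *: unit_row t) *m M) 0 v = (x *m M) 0 v + c * M t v.
Proof.
rewrite mulmxDl -scalemxAl !mxE; congr (_ + _); congr (_ * _).
rewrite (sum_supported1 (a := t)) ?mxE ?eqxx ?mul1r // => j jt.
by rewrite mxE eqxx (negbTE jt) mul0r.
Qed.

Lemma zero_atE (x : 'rV[R]_n) t j : zero_at t x 0 j = if j == t then 0 else x 0 j.
Proof. by rewrite add_unit_rowE; case: eqP => [->|]; rewrite ?mulr1 ?addrN ?mulr0 ?addr0. Qed.

Lemma zero_atK (x : 'rV[R]_n) t : x = zero_at t x + x 0 t *: unit_row t.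
Proof. by rewrite -addrA -scalerDl addNr scale0r addr0. Qed.

Lemma row0P (x : 'rV[R]_n) : (forall i, x 0 i = 0) -> x = 0.
Proof. by move=> H; apply/rowP => i; rewrite H mxE. Qed.

Lemma zero_at_eq0 (x : 'rV[R]_n) t : zero_at t x = 0 -> x 0 t = 0 -> x = 0.
Proof. by move=> x0 xt; rewrite (zero_atK x t) x0 xt scale0r addr0. Qed.

Section Pattern.
Variable M : 'M[R]_n.
Hypothesis M_pat : has_pattern M.

Lemma pattern0 i j : i != j -> ~~ e i j -> M i j = 0.
Proof. by move=> ij; rewrite -M_pat // => /negPn/eqP. Qed.

Lemma pattern_edge i j : e i j -> M i j != 0.
Proof. by move=> eij; rewrite M_pat //; apply: contraTneq eij => ->; rewrite e_irr. Qed.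

Lemma sole_neighbour_row0 (V : {set 'I_n}) t s v :
  v \in V -> v != t -> v != s -> sole_neighbour V t s -> M t v = 0.
Proof.
move=> vV vt vs N; apply: pattern0; first by rewrite eq_sym.
by apply: contra vs => etv; rewrite (N v vV etv).
Qed.

Lemma kernel_eq_at_leaf (V : {set 'I_n}) (x : 'rV[R]_n) t s :
  s != t -> sole_neighbour V t s -> (forall i, i \notin V -> x 0 i = 0) ->
  (x *m M) 0 t = x 0 t * M t t + x 0 s * M s t.
Proof.
move=> st N sup; rewrite row_mulE (sum_supported2 (a := t) (b := s)) 1?eq_sym //.
move=> j jt js; have [jV|jV] := boolP (j \in V); last by rewrite sup // mul0r.
by rewrite (pattern0 jt) ?mulr0 // e_sym; apply: contra js => etj; rewrite (N j jV etj).
Qed.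

Lemma kernel_eq_at_isolated (V : {set 'I_n}) (x : 'rV[R]_n) t :
  (forall j, j \in V -> ~~ e t j) -> (forall i, i \notin V -> x 0 i = 0) ->
  (x *m M) 0 t = x 0 t * M t t.
Proof.
move=> N sup; rewrite row_mulE (sum_supported1 (a := t)) // => j jt.
have [jV|jV] := boolP (j \in V); last by rewrite sup // mul0r.
by rewrite (pattern0 jt) ?mulr0 // e_sym N.
Qed.

(* Schur complement of the pivot M t t, seen on the vertices other than t:
   only the entry at (s, s) changes *)
Definition schur (t s : 'I_n) : 'M[R]_n := M - (M s t * M t s / M t t) *: delta_mx s s.

Lemma schurE t s i j :
  schur t s i j = M i j - (M s t * M t s / M t t) * ((i == s) && (j == s))%:R.
Proof. by rewrite !mxE. Qed.

Lemma schur_pattern t s : has_pattern (schur t s).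
Proof.
move=> i j ij; rewrite schurE -M_pat //.
have [i_s|] := eqVneq i s; last by rewrite andFb mulr0 subr0.
by move: ij; rewrite i_s eq_sym => /negbTE ->; rewrite andbF mulr0 subr0.
Qed.

Lemma mul_schur (y : 'rV[R]_n) t s v :
  (y *m schur t s) 0 v = (y *m M) 0 v - (M s t * M t s / M t t) * (y 0 s * (v == s)%:R).
Proof.
rewrite !row_mulE.
under eq_bigr => j _ do rewrite schurE mulrBr.
rewrite sumrB; congr (_ - _); rewrite (sum_supported1 (a := s)).
  by rewrite eqxx /=; ring.
by move=> j /negbTE ->; rewrite /= !mulr0.
Qed.

Lemma zero_at_id (x : 'rV[R]_n) t : x 0 t = 0 -> zero_at t x = x.
Proof. by move=> xt; rewrite [RHS](zero_atK x t) xt scale0r addr0. Qed.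

Lemma zero_at_support (V : {set 'I_n}) (x : 'rV[R]_n) t :
  (forall i, i \notin V -> x 0 i = 0) -> forall i, i \notin V :\ t -> zero_at t x 0 i = 0.
Proof.
move=> sup i; rewrite zero_atE in_setD1 negb_and negbK.
by case: eqP => //= _; apply: sup.
Qed.

Definition leaf_reduction (V Z0 V' : {set 'I_n}) (M' : 'M[R]_n) (t : 'I_n) : Prop :=
  forall x, in_kernel_on V M x -> {in Z0, forall z, x 0 z = 0} ->
    in_kernel_on V' M' (zero_at t x) /\ (zero_at t x = 0 -> x = 0).

Lemma reduce_known (V : {set 'I_n}) t : leaf_reduction V [set t] (V :\ t) M t.
Proof.
move=> x [sup eqs] xZ; have xt : x 0 t = 0 by apply: xZ; rewrite inE.
rewrite zero_at_id //; split=> //; split=> [i|v /setD1P[_ /eqs] //].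
by move/(zero_at_support sup); rewrite zero_at_id.
Qed.

Lemma reduce_isolated (V : {set 'I_n}) t : t \in V ->
  (forall j, j \in V -> ~~ e t j) -> M t t != 0 -> leaf_reduction V set0 (V :\ t) M t.
Proof.
move=> tV N Mtt x hx _; apply: reduce_known => // z /set1P ->.
have := hx.2 t tV; rewrite (kernel_eq_at_isolated N hx.1).
by move/eqP; rewrite mulf_eq0 (negbTE Mtt) orbF => /eqP.
Qed.

Lemma reduce_schur (V : {set 'I_n}) t s : t \in V -> s != t ->
  sole_neighbour V t s -> M t t != 0 -> leaf_reduction V set0 (V :\ t) (schur t s) t.
Proof.
move=> tV st N Mtt x [sup eqs] _.
have xt : x 0 t = - (x 0 s * M s t) / M t t.
  have := eqs t tV; rewrite (kernel_eq_at_leaf st N sup) => /eqP.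
  by rewrite addr_eq0 => /eqP <-; field.
split; last first.
  move=> x0; apply: (zero_at_eq0 x0).
  have := congr1 (fun y : 'rV[R]_n => y 0 s) x0; rewrite /= zero_atE (negbTE st) mxE.
  by rewrite xt => ->; rewrite mul0r oppr0 mul0r.
split; first exact: zero_at_support.
move=> v /setD1P[vt vV]; rewrite mul_schur mul_add_unit_row eqs // add0r zero_atE (negbTE st).
have [->|vs] := eqVneq v s; first by rewrite xt mulr1; field.
by rewrite (sole_neighbour_row0 vV vt vs N) !mulr0 subr0.
Qed.

(* a leaf with zero pivot forces the coordinate of its neighbour to vanish,
   and both are deleted *)
Lemma reduce_pair (V : {set 'I_n}) t s : t \in V -> s \in V ->
  sole_neighbour V t s -> e t s -> M t t = 0 ->
  leaf_reduction V set0 (V :\: [set t; s]) M t.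
Proof.
move=> tV sV N ets Mtt x [sup eqs] _.
have st : s != t by apply: contraTneq ets => ->; rewrite e_irr.
have xs : x 0 s = 0.
  have := eqs t tV; rewrite (kernel_eq_at_leaf st N sup) Mtt mulr0 add0r => /eqP.
  have Mst : M s t != 0 by apply: pattern_edge; rewrite e_sym.
  by rewrite mulf_eq0 (negbTE Mst) orbF => /eqP.
split.
  split=> [i|v].
    rewrite zero_atE in_setD in_set2 negb_and negbK -orbA.
    by case: eqP => //= _ /orP[/eqP->|/sup].
  rewrite in_setD in_set2 negb_or => /andP[/andP[vt vs] vV].
  by rewrite mul_add_unit_row eqs // (sole_neighbour_row0 vV vt vs N) mulr0 addr0.
move=> x0; apply: (zero_at_eq0 x0); apply/eqP.
have := eqs s sV; rewrite {1}(zero_atK x t) mul_add_unit_row x0 mul0mx mxE add0r.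
by move/eqP; rewrite mulf_eq0 (negbTE (pattern_edge ets)) orbF.
Qed.

Definition kernel_lifts (U : {set 'I_n}) (M' : 'M[R]_n) (U' : {set 'I_n}) (t : 'I_n) : Prop :=
  forall y, in_kernel_on U' M' y -> exists c, in_kernel_on U M (y + c *: unit_row t).

Lemma kernel_trivial_lift (U U' : {set 'I_n}) (M' : 'M[R]_n) t : t \notin U' ->
  kernel_lifts U M' U' t -> kernel_trivial U M -> kernel_trivial U' M'.
Proof.
move=> tU' lift iU y hy; have [c /iU y0] := lift y hy.
have yt : y 0 t = 0 by apply: hy.1.
apply: row0P => i; have [->//|it] := eqVneq i t.
by have := congr1 (fun z : 'rV[R]_n => z 0 i) y0; rewrite add_unit_rowE (negbTE it) mulr0 addr0 mxE.
Qed.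

Lemma lift_support (U U' : {set 'I_n}) (y : 'rV[R]_n) t c : t \in U -> U' \subset U ->
  (forall i, i \notin U' -> y 0 i = 0) -> forall i, i \notin U -> (y + c *: unit_row t) 0 i = 0.
Proof.
move=> tU U'U sup i iU; have it : i != t by apply: contraNneq iU => ->.
by rewrite add_unit_rowE (negbTE it) mulr0 addr0 sup //; apply: contra iU; apply/subsetP.
Qed.

Lemma lift_isolated (U : {set 'I_n}) t : t \in U ->
  (forall j, j \in U -> ~~ e t j) -> kernel_lifts U M (U :\ t) t.
Proof.
move=> tU N y [sup eqs]; exists 0; rewrite scale0r addr0.
have supU i : i \notin U -> y 0 i = 0 by move=> iU; apply: sup; apply: contra iU => /setD1P[].
split=> // v vU; have [->|vt] := eqVneq v t; last by apply: eqs; rewrite in_setD1 vt.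
by rewrite (kernel_eq_at_isolated N supU) sup ?mul0r ?setD11.
Qed.

Lemma lift_schur (U : {set 'I_n}) t s : t \in U -> s != t ->
  sole_neighbour U t s -> M t t != 0 -> kernel_lifts U (schur t s) (U :\ t) t.
Proof.
move=> tU st N Mtt y [sup eqs]; exists (- (y 0 s * M s t) / M t t).
have supx := lift_support (- (y 0 s * M s t) / M t t) tU (subsetDl U _) sup.
have yt : y 0 t = 0 by rewrite sup // in_setD1 eqxx.
split=> // v vU; have [->|vt] := eqVneq v t.
  rewrite (kernel_eq_at_leaf st N supx) !add_unit_rowE eqxx (negbTE st) yt.
  by rewrite add0r mulr1 mulr0 addr0; field.
have := eqs v (introT setD1P (conj vt vU)); rewrite mul_schur mul_add_unit_row.
have [->|vs] := eqVneq v s; first by rewrite mulr1 => /eqP; rewrite subr_eq0 => /eqP ->; field.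
by rewrite !mulr0 subr0 => ->; rewrite (sole_neighbour_row0 vU vt vs N) mulr0 addr0.
Qed.

Lemma lift_pair (U : {set 'I_n}) t s : t \in U -> s \in U ->
  sole_neighbour U t s -> e t s -> M t t = 0 -> kernel_lifts U M (U :\: [set t; s]) t.
Proof.
move=> tU sU N ets Mtt y [sup eqs]; exists (- (y *m M) 0 s / M t s).
have st : s != t by apply: contraTneq ets => ->; rewrite e_irr.
have Mts := pattern_edge ets.
have supx := lift_support (- (y *m M) 0 s / M t s) tU (subsetDl U _) sup.
have ys : y 0 s = 0 by rewrite sup // in_setD in_set2 eqxx orbT.
split=> // v vU; have [->|vt] := eqVneq v t.
  by rewrite (kernel_eq_at_leaf st N supx) !add_unit_rowE (negbTE st) ys Mtt !mulr0 !add0r mul0r.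
rewrite mul_add_unit_row; have [->|vs] := eqVneq v s; first by field.
by rewrite eqs ?(sole_neighbour_row0 vU vt vs N) ?mulr0 ?addr0 // in_setD in_set2 negb_or vt vs.
Qed.

End Pattern.

Lemma kernel_trivial_ext (U : {set 'I_n}) (M M' : 'M[R]_n) :
  (forall i j, i \in U -> j \in U -> M i j = M' i j) -> kernel_trivial U M -> kernel_trivial U M'.
Proof.
move=> H iU x [sup eqs]; apply: iU; split=> // v vU.
rewrite -(eqs v vU) !row_mulE; apply: eq_bigr => j _.
by have [jU|jU] := boolP (j \in U); [rewrite H | rewrite sup // !mul0r].
Qed.

End Kernels.
Arguments unit_row {R n} t.

Section Induction.
Variables (R : fieldType) (n : nat) (e : rel 'I_n).
Hypotheses (e_sym : symmetric e) (e_irr : irreflexive e)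
  (no_cycle : ~ (exists s : seq 'I_n, [/\ uniq s, (3 <= size s)%N & cycle e s])).

Definition edges_within (F : {set {set 'I_n}}) (W : {set 'I_n}) : Prop :=
  forall f, f \in F -> exists u v, [/\ f = [set u; v], e u v, u \in W & v \in W].

Definition max_degree2 (F : {set {set 'I_n}}) : Prop :=
  forall x, (#|[set f in F | x \in f]| <= 2)%N.

Definition determines (V Z : {set 'I_n}) (M : 'M[R]_n) : Prop :=
  forall x, in_kernel_on V M x -> {in Z, forall z, x 0 z = 0} -> x = 0.

Definition kernel_bound (V U : {set 'I_n}) (M : 'M[R]_n) (F : {set {set 'I_n}}) : Prop :=
  exists2 Z : {set 'I_n}, (#|Z| + #|F| <= #|V :\: U|)%N & determines V Z M.

Definition admissible (V U : {set 'I_n}) (M : 'M[R]_n) (F : {set {set 'I_n}}) : Prop :=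
  [/\ U \subset V, has_pattern e M, kernel_trivial U M,
      edges_within F (V :\: U) & max_degree2 F].

Definition reducible_at (V U : {set 'I_n}) (M : 'M[R]_n) (F : {set {set 'I_n}}) t : Prop :=
  exists (V' U' : {set 'I_n}) (M' : 'M[R]_n) (F' : {set {set 'I_n}}),
  [/\ V' \subset V :\ t, admissible V' U' M' F'
    & kernel_bound V' U' M' F' -> kernel_bound V U M F].

Lemma kernel_bound_reduce (V U V' U' Z0 : {set 'I_n}) (M M' : 'M[R]_n)
    (F F' : {set {set 'I_n}}) t :
  (#|Z0| + #|V' :\: U'| + #|F| <= #|V :\: U| + #|F'|)%N ->
  leaf_reduction M V Z0 V' M' t -> kernel_bound V' U' M' F' -> kernel_bound V U M F.
Proof.
move=> cnt red [Z' cZ' detZ']; exists (Z0 :|: Z').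
  by have := (leq_card_setU Z0 Z').1; lia.
move=> x hx xZ; have [hy y_inj] := red x hx (fun z zZ0 => xZ z (introT setUP (or_introl zZ0))).
apply/y_inj/detZ' => // z zZ'; rewrite zero_atE; case: eqP => // _.
by apply: xZ; rewrite inE zZ' orbT.
Qed.

Lemma setD_cancel (V U X : {set 'I_n}) : X \subset U -> (V :\: X) :\: (U :\: X) = V :\: U.
Proof.
move=> XU; apply/setP => i; rewrite !inE.
by have [iX|] := boolP (i \in X); rewrite ?(subsetP XU i iX) ?andbF.
Qed.

Lemma card_setD_sub (V U X : {set 'I_n}) : X \subset V :\: U ->
  (#|(V :\: X) :\: U| + #|X| = #|V :\: U|)%N.
Proof.
move=> XW; rewrite setDDl setUC -setDDl addnC -(cardsID X (V :\: U)).
by rewrite (setIidPr XW).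
Qed.

Lemma disjoint_set2 (f : {set 'I_n}) t s :
  [disjoint f & [set t; s]] = (t \notin f) && (s \notin f).
Proof. by rewrite disjoint_sym disjoints_subset subUset !sub1set !inE. Qed.

Lemma edges_within_avoid (F : {set {set 'I_n}}) (W X : {set 'I_n}) :
  edges_within F W -> edges_within [set f in F | [disjoint f & X]] (W :\: X).
Proof.
move=> hF f; rewrite inE => /andP[/hF[u [v [fE euv uW vW]]] fX].
have notX y : y \in f -> y \in X = false by apply: disjointFr.
exists u, v; rewrite !inE uW vW !notX // fE !inE eqxx ?orbT //.
Qed.

Lemma max_degree2_sub (F F' : {set {set 'I_n}}) :
  F' \subset F -> max_degree2 F -> max_degree2 F'.
Proof.
move=> sub H x; apply: leq_trans (H x); apply: subset_leq_card.
by apply/subsetP => f; rewrite !inE => /andP[/(subsetP sub) -> ->].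
Qed.

Lemma card_avoiding (F G : {set {set 'I_n}}) (X : {set 'I_n}) :
  (forall f, f \in F -> ~~ [disjoint f & X] -> f \in G) ->
  (#|F| <= #|[set f in F | [disjoint f & X]]| + #|G|)%N.
Proof.
move=> H; rewrite -(cardsID [set f : {set 'I_n} | [disjoint f & X]] F).
have -> : F :&: [set f : {set 'I_n} | [disjoint f & X]] = [set f in F | [disjoint f & X]].
  by apply/setP => f; rewrite !inE.
rewrite leq_add2l; apply: subset_leq_card; apply/subsetP => f.
by rewrite !inE => /andP[/H fG fF]; apply: fG.
Qed.

Section LeafCases.
Variables (V U : {set 'I_n}) (M : 'M[R]_n) (F : {set {set 'I_n}}) (t : 'I_n).
Hypotheses (UV : U \subset V) (M_pat : has_pattern e M) (iU : kernel_trivial U M)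
  (hF : edges_within F (V :\: U)) (hdeg : max_degree2 F)
  (tV : t \in V) (t_leaf : is_leaf_in e V t).

Lemma leaf_sole_neighbour (X : {set 'I_n}) s : X \subset V -> s \in V -> e t s ->
  sole_neighbour e X t s.
Proof. by move=> XV sV ets j /(subsetP XV) jV etj; apply: t_leaf. Qed.

Lemma admissible_remove_in_U (X : {set 'I_n}) (M' : 'M[R]_n) : X \subset U ->
  has_pattern e M' -> kernel_trivial (U :\: X) M' -> admissible (V :\: X) (U :\: X) M' F.
Proof. by move=> XU M'_pat iU'; split; rewrite ?setD_cancel ?setSD. Qed.

Lemma admissible_remove_out_U (X : {set 'I_n}) (M' : 'M[R]_n) : X \subset V :\: U ->
  has_pattern e M' -> kernel_trivial U M' ->
  admissible (V :\: X) U M' [set f in F | [disjoint f & X]].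
Proof.
move=> XW M'_pat iU'; split=> //.
- apply/subsetP => i iUi; rewrite inE (subsetP UV i iUi) andbT.
  by apply: contraL iUi => /(subsetP XW); rewrite inE => /andP[].
- by rewrite setDDl setUC -setDDl; apply: edges_within_avoid.
- by apply: max_degree2_sub hdeg; apply/subsetP => f; rewrite inE => /andP[].
Qed.

(* a vertex of U without neighbour in U has a nonzero pivot, since otherwise
   the t-th unit vector would lie in the kernel of M[U] *)
Lemma isolated_pivot : t \in U -> (forall j, j \in U -> ~~ e t j) -> M t t != 0.
Proof.
move=> tU N; apply/negP => /eqP Mtt.
suff /(congr1 (fun x : 'rV[R]_n => x 0 t)) : unit_row t = 0 :> 'rV[R]_n.
  by rewrite /unit_row !mxE !eqxx => /eqP; rewrite oner_eq0.
apply: iU; split=> [i iNU|v vU]; first by rewrite /unit_row mxE eqxx; case: eqP iNU => // ->; rewrite tU.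
rewrite /unit_row -rowE mxE; have [->//|vt] := eqVneq v t.
by apply: (pattern0 M_pat); [rewrite eq_sym | apply: N].
Qed.

Lemma reducible_isolated_in_U : t \in U -> (forall j, j \in V -> ~~ e t j) ->
  reducible_at V U M F t.
Proof.
move=> tU N; have NU j : j \in U -> ~~ e t j by move/(subsetP UV); apply: N.
have Mtt := isolated_pivot tU NU.
have tU1 : [set t] \subset U by rewrite sub1set.
exists (V :\ t), (U :\ t), M, F; split=> //.
- apply: admissible_remove_in_U => //.
  exact: kernel_trivial_lift (negbT (setD11 t U)) (lift_isolated e_sym M_pat tU NU) iU.
- apply: kernel_bound_reduce (reduce_isolated e_sym M_pat tV N Mtt).
  by rewrite setD_cancel // cards0.
Qed.

Lemma reducible_schur_in_U s : t \in U -> s \in V -> e t s -> M t t != 0 ->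
  reducible_at V U M F t.
Proof.
move=> tU sV ets Mtt; have st : s != t by apply: contraTneq ets => ->; rewrite e_irr.
have tU1 : [set t] \subset U by rewrite sub1set.
exists (V :\ t), (U :\ t), (schur M t s), F; split=> //.
- apply: admissible_remove_in_U => //; first exact: schur_pattern.
  have lift := lift_schur e_sym M_pat tU st (leaf_sole_neighbour UV sV ets) Mtt.
  exact: kernel_trivial_lift (negbT (setD11 t U)) lift iU.
- apply: kernel_bound_reduce (reduce_schur e_sym M_pat tV st (leaf_sole_neighbour (subxx V) sV ets) Mtt).
  by rewrite setD_cancel // cards0.
Qed.

Lemma reducible_pair_in_U : t \in U -> M t t = 0 -> reducible_at V U M F t.
Proof.
move=> tU Mtt; have [s sU ets] : exists2 s, s \in U & e t s.
  have [/exists_inP[s sU ets]|] := boolP [exists s in U, e t s]; first by exists s.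
  by rewrite negb_exists_in => /forall_inP/(isolated_pivot tU); rewrite Mtt eqxx.
have sV := subsetP UV s sU.
have tsU : [set t; s] \subset U by rewrite subUset !sub1set tU sU.
exists (V :\: [set t; s]), (U :\: [set t; s]), M, F; split=> //.
- by apply: setDS; rewrite sub1set !inE eqxx.
- apply: admissible_remove_in_U => //.
  have lift := lift_pair e_sym e_irr M_pat tU sU (leaf_sole_neighbour UV sV ets) ets Mtt.
  apply: kernel_trivial_lift _ lift iU.
  by rewrite !inE eqxx.
- have N := leaf_sole_neighbour (subxx V) sV ets.
  apply: kernel_bound_reduce (reduce_pair e_sym e_irr M_pat tV sV N ets Mtt).
  by rewrite setD_cancel // cards0.
Qed.

Lemma leaf_edge f0 : f0 \in F -> t \in f0 ->
  exists2 s, s \in V :\: U & e t s /\ forall f, f \in F -> t \in f -> f = [set t; s].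
Proof.
have Hf g : g \in F -> t \in g -> exists2 w, w \in V :\: U & e t w /\ g = [set t; w].
  move=> gF; case: (hF gF) => u [v [-> euv uW vW]]; rewrite !inE.
  by case/orP=> /eqP ->; [exists v | exists u; rewrite 1?e_sym 1?setUC].
move=> f0F tf0; have [s sW [ets _]] := Hf f0 f0F tf0; exists s => //; split=> // g gF tg.
have [w /setDP[wV _] [etw ->]] := Hf g gF tg.
by rewrite (t_leaf wV (subsetP (subsetDl V U) s sW) etw ets).
Qed.

Lemma reducible_pair_out_U s : t \notin U -> s \in V :\: U -> e t s ->
  (forall f, f \in F -> t \in f -> f = [set t; s]) -> M t t = 0 ->
  reducible_at V U M F t.
Proof.
move=> tU sW ets Hts Mtt; have /setDP[sV sU] := sW.
have ts : t != s by apply: contraTneq ets => ->; rewrite e_irr.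
have XW : [set t; s] \subset V :\: U by rewrite subUset !sub1set inE tU tV sW.
exists (V :\: [set t; s]), U, M, [set f in F | [disjoint f & [set t; s]]]; split.
- by apply: setDS; rewrite sub1set !inE eqxx.
- exact: admissible_remove_out_U.
- have N := leaf_sole_neighbour (subxx V) sV ets.
  apply: kernel_bound_reduce (reduce_pair e_sym e_irr M_pat tV sV N ets Mtt).
  have cF : (#|F| <= #|[set f in F | [disjoint f & [set t; s]]]| + 2)%N.
    apply: leq_trans (leq_add (leqnn _) (hdeg s)); apply: card_avoiding => f fF.
    rewrite disjoint_set2 negb_and !negbK inE fF => /orP[/(Hts f fF) ->|//].
    by rewrite !inE eqxx orbT.
  have c2 : #|[set t; s]| = 2%N by rewrite cards2 ts.
  have := card_setD_sub XW; rewrite c2 cards0 => <-.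
  by rewrite add0n -addnA leq_add2l addnC.
Qed.

Lemma reducible_schur_out_U s : t \notin U -> s \in V :\: U -> e t s ->
  (forall f, f \in F -> t \in f -> f = [set t; s]) -> M t t != 0 ->
  reducible_at V U M F t.
Proof.
move=> tU sW ets Hts Mtt; have /setDP[sV sU] := sW.
have st : s != t by apply: contraTneq ets => ->; rewrite e_irr.
have XW : [set t] \subset V :\: U by rewrite sub1set inE tU tV.
exists (V :\ t), U, (schur M t s), [set f in F | [disjoint f & [set t]]]; split=> //.
- apply: admissible_remove_out_U => //; first exact: schur_pattern.
  apply: kernel_trivial_ext iU => i j iUi _; rewrite schurE.
  by rewrite (_ : i == s = false) ?mulr0 ?subr0 //; apply: contraNF sU => /eqP <-.
- apply: kernel_bound_reduce (reduce_schur e_sym M_pat tV st (leaf_sole_neighbour (subxx V) sV ets) Mtt).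
  have cF : (#|F| <= #|[set f in F | [disjoint f & [set t]]]| + #|[set [set t; s]]|)%N.
    apply: card_avoiding => f fF; rewrite disjoint_sym disjoints1 negbK => tf.
    by rewrite (Hts f fF tf) inE.
  have := card_setD_sub XW; rewrite cards1 cards0 => <-.
  by rewrite add0n -addnA leq_add2l addnC; move: cF; rewrite cards1.
Qed.

(* t outside U and on no edge of F: its coordinate is kept in Z, delete t *)
Lemma reducible_free_out_U : t \notin U -> (forall f, f \in F -> t \notin f) ->
  reducible_at V U M F t.
Proof.
move=> tU Ht; have XW : [set t] \subset V :\: U by rewrite sub1set inE tU tV.
exists (V :\ t), U, M, [set f in F | [disjoint f & [set t]]]; split=> //.
- exact: admissible_remove_out_U.
- apply: kernel_bound_reduce (@reduce_known _ _ M V t).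
  have cF : (#|F| <= #|[set f in F | [disjoint f & [set t]]]| + #|set0 : {set {set 'I_n}}|)%N.
    by apply: card_avoiding => f /Ht tf; rewrite disjoint_sym disjoints1 tf.
  have := card_setD_sub XW; rewrite !cards1 => <-.
  rewrite (addnC 1%N) -!addnA leq_add2l leq_add2l.
  by move: cF; rewrite cards0 addn0.
Qed.

Lemma leaf_reducible : reducible_at V U M F t.
Proof.
have [tU|tU] := boolP (t \in U).
  have [/eqP Mtt|Mtt] := boolP (M t t == 0); first exact: reducible_pair_in_U.
  have [/exists_inP[s sV ets]|] := boolP [exists s in V, e t s].
    exact: reducible_schur_in_U sV ets Mtt.
  by rewrite negb_exists_in => /forall_inP; apply: reducible_isolated_in_U.
have [/exists_inP[f0 f0F tf0]|] := boolP [exists f in F, t \in f].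
  have [s sW [ets Hts]] := leaf_edge f0F tf0.
  have [/eqP Mtt|Mtt] := boolP (M t t == 0).
    exact: reducible_pair_out_U sW ets Hts Mtt.
  exact: reducible_schur_out_U sW ets Hts Mtt.
by rewrite negb_exists_in => /forall_inP; apply: reducible_free_out_U.
Qed.
End LeafCases.

Lemma kernel_bound_empty (U : {set 'I_n}) (M : 'M[R]_n) F :
  admissible set0 U M F -> kernel_bound set0 U M F.
Proof.
case=> _ _ _ hF _; exists set0; last by move=> x [sup _] _; apply: row0P => i; apply: sup; rewrite inE.
suff -> : F = set0 by rewrite !cards0.
by apply/setP => f; rewrite inE; apply/negP => /hF[u [v [_ _]]]; rewrite !inE andbF.
Qed.

Lemma kernel_bound_admissible (V U : {set 'I_n}) (M : 'M[R]_n) F :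
  admissible V U M F -> kernel_bound V U M F.
Proof.
move=> adm; have := leqnn #|V|; move: {2}#|V| => k.
elim: k V U M F adm => [|k IH] V U M F adm hV;
  have [V0|V0] := eqVneq V set0; try by move: adm; rewrite V0; apply: kernel_bound_empty.
  by move: hV; rewrite leqn0 cards_eq0 (negbTE V0).
have [t tV t_leaf] := leaf_exists e_sym e_irr no_cycle V0.
case: (adm) => UV M_pat iU hF hdeg.
have [V' [U' [M' [F' [V'V adm' back]]]]] := leaf_reducible UV M_pat iU hF hdeg tV t_leaf.
apply: back (IH _ _ _ _ adm' _); apply: leq_trans (subset_leq_card V'V) _.
by move: hV; rewrite (cardsD1 t V) tV add1n ltnS.
Qed.

End Induction.

Lemma nullity_le_determining (R : fieldType) (n : nat) (A : 'M[R]_n) (Z : {set 'I_n}) :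
  determines setT Z A -> (nullity A <= #|Z|)%N.
Proof.
move=> detZ; rewrite /nullity -mxrank_ker.
pose S : 'M[R]_(n, #|Z|) := \matrix_(i, j) (i == enum_val j)%:R.
have := mxrank_mul_ker (kermx A) S.
suff -> : \rank (kermx A :&: kermx S)%MS = 0%N.
  by rewrite addn0 => <-; apply: rank_leq_col.
apply/eqP; rewrite mxrank_eq0; apply/eqP/row_matrixP => i; rewrite row0.
set u := row i _.
have uA : u *m A = 0 by apply/sub_kermxP/(submx_trans (row_sub _ _))/capmxSl.
have uS : u *m S = 0 by apply/sub_kermxP/(submx_trans (row_sub _ _))/capmxSr.
apply: detZ => [|z zZ]; first by split=> [j|v _]; rewrite ?inE // uA mxE.
have := congr1 (fun w : 'rV[R]_#|Z| => w 0 (enum_rank_in zZ z)) uS.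
rewrite mxE (bigD1 z) //= big1 ?addr0 => [|j jz]; rewrite !mxE enum_rankK_in //.
  by rewrite eqxx mulr1.
by rewrite (negbTE jz) mulr0.
Qed.

Section Blocks.
Variables (R : fieldType) (n : nat) (e : rel 'I_n) (A : 'M[R]_n).
Hypothesis A_pat : has_pattern e A.

Definition restrict_row (X : {set 'I_n}) (x : 'rV[R]_n) : 'rV[R]_#|X| :=
  \row_k x 0 (enum_val k).

Lemma restrict_row_mul (X : {set 'I_n}) (x : 'rV[R]_n) (k : 'I_#|X|) :
  (restrict_row X x *m principal_submx A X) 0 k = \sum_(j in X) x 0 j * A j (enum_val k).
Proof.
by rewrite mxE (big_enum_val (fun j => x 0 j * A j (enum_val k))); apply: eq_bigr => j _; rewrite !mxE.
Qed.

Lemma restrict_kernel (U X : {set 'I_n}) (x : 'rV[R]_n) : X \subset U ->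
  (forall j v, j \in U -> j \notin X -> v \in X -> ~~ e j v) ->
  in_kernel_on U A x -> restrict_row X x *m principal_submx A X = 0.
Proof.
move=> XU sep [sup eqs]; apply/rowP => k; rewrite restrict_row_mul mxE.
have vX : enum_val k \in X := enum_valP k.
rewrite -[RHS](eqs _ (subsetP XU _ vX)) row_mulE [RHS](bigID (mem X)) /=.
rewrite [Y in _ = _ + Y]big1 ?addr0 // => j jX.
have [jU|jU] := boolP (j \in U); last by rewrite sup // mul0r.
have jv : j != enum_val k by apply: contraNneq jX => ->.
by rewrite (pattern0 A_pat jv (sep _ _ jU jX vX)) mulr0.
Qed.

Lemma kernel_trivial_blocks c (Ts : 'I_c -> {set 'I_n}) :
  (forall i j, i != j -> independent e (Ts i) (Ts j)) ->
  (forall i, principal_submx A (Ts i) \in unitmx) ->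
  kernel_trivial (\bigcup_(i < c) Ts i) A.
Proof.
move=> ind unit x hx; apply: row0P => j.
have [/bigcupP[i _ jT]|jU] := boolP (j \in \bigcup_(i < c) Ts i); last exact: hx.1.
have sep j' v : j' \in \bigcup_(i < c) Ts i -> j' \notin Ts i -> v \in Ts i -> ~~ e j' v.
  case/bigcupP=> i' _ j'T j'T' vT; apply: (ind i' i) => //.
  by apply: contraNneq j'T' => <-.
have y0 := restrict_kernel (bigcup_sup i isT) sep hx.
have := mulmxK (unit i) (restrict_row (Ts i) x); rewrite y0 mul0mx => /rowP/(_ (enum_rank_in jT j)).
by rewrite !mxE enum_rankK_in.
Qed.

End Blocks.

Section PathCovers.
Variables (n : nat) (e : rel 'I_n).

Definition path_witness (B : {set 'I_n}) (t : (#|B|).-tuple 'I_n) : bool :=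
  [&& uniq t, B == [set x in t] &
      [forall x in B, forall y in B,
        e x y == ((index y t == (index x t).+1) || (index x t == (index y t).+1))]].

Definition path_order (B : {set 'I_n}) : seq 'I_n :=
  if [pick t : (#|B|).-tuple 'I_n | path_witness t] is Some t then val t else [::].

Lemma path_orderP (B : {set 'I_n}) : induces_path e B ->
  [/\ uniq (path_order B), forall x, (x \in B) = (x \in path_order B) &
   forall x y, x \in B -> y \in B -> e x y =
     (index y (path_order B) == (index x (path_order B)).+1) ||
     (index x (path_order B) == (index y (path_order B)).+1)].
Proof.
move=> ip; rewrite /path_order; case: pickP => [t /and3P[U /eqP BE /forall_inP H]|none].
  split=> // [x|x y xB yB]; first by rewrite {1}BE inE.
  by have /forall_inP/(_ y yB)/eqP := H x xB.
by case/existsP: ip => t; rewrite -/(path_witness t) none.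
Qed.

Definition cover_edges (Q : {set {set 'I_n}}) : {set {set 'I_n}} :=
  [set f : {set 'I_n} | [exists B in Q, [exists u in B, [exists v in B,
    (f == [set u; v]) && e u v]]]].

Lemma cover_edges_within (Q : {set {set 'I_n}}) (W : {set 'I_n}) :
  partition Q W -> edges_within e (cover_edges Q) W.
Proof.
move=> pQ f; rewrite inE => /exists_inP[B BQ /exists_inP[u uB /exists_inP[v vB /andP[/eqP fE euv]]]].
have sub z : z \in B -> z \in W.
  by move=> zB; rewrite -(cover_partition pQ); apply/bigcupP; exists B.
by exists u, v; split=> //; apply: sub.
Qed.

Lemma cover_edges_mem (Q : {set {set 'I_n}}) f x : trivIset Q -> f \in cover_edges Q -> x \in f ->
  exists y, [/\ pblock Q x \in Q, x \in pblock Q x, y \in pblock Q x,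
    e x y || e y x & f = [set x; y]].
Proof.
move=> tQ; rewrite inE => /exists_inP[B BQ /exists_inP[u uB /exists_inP[v vB /andP[/eqP fE euv]]]].
rewrite fE !inE => /orP[/eqP->|/eqP->].
  by rewrite (def_pblock tQ BQ uB); exists v; rewrite euv.
by rewrite (def_pblock tQ BQ vB); exists u; rewrite euv orbT setUC.
Qed.

Section CoverCount.
Variables (W : {set 'I_n}) (Q : {set {set 'I_n}}).
Hypothesis Q_cover : is_path_cover e W Q.

Lemma path_cover_partition : partition Q W.
Proof. by case/andP: Q_cover. Qed.

Lemma path_cover_paths B : B \in Q -> induces_path e B.
Proof. by case/andP: Q_cover => _ /forall_inP; apply. Qed.

Lemma block_of_vertex x : x \in W ->
  [/\ pblock Q x \in Q, x \in pblock Q x & x \in path_order (pblock Q x)].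
Proof.
move=> xW; have xc : x \in cover Q by rewrite (cover_partition path_cover_partition).
have BQ := pblock_mem xc; have xB : x \in pblock Q x by rewrite mem_pblock.
by have [_ memE _] := path_orderP (path_cover_paths BQ); rewrite -memE.
Qed.

(* a vertex lies on at most two edges of the cover: to its neighbours
   on its path *)
Lemma cover_edges_degree : max_degree2 (cover_edges Q).
Proof.
move=> x; have tQ : trivIset Q by case/and3P: path_cover_partition.
set s := path_order (pblock Q x); set ix := index x s.
apply: (@leq_trans #|[set [set x; nth x s ix.+1]; [set x; nth x s ix.-1]]|); last first.
  by rewrite cards2; case: (_ != _).
apply: subset_leq_card; apply/subsetP => f; rewrite inE => /andP[fF xf].
have [y [BQ xB yB exy fE]] := cover_edges_mem tQ fF xf.
have [_ memE adj] := path_orderP (path_cover_paths BQ).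
have ys : y \in s by rewrite -memE.
have : (index y s == ix.+1) || (ix == (index y s).+1).
  by move: exy; rewrite !adj // -/s -/ix; case: (index y s == ix.+1); case: (ix == _).
case/orP=> /eqP iy; rewrite fE !inE; first by rewrite -iy nth_index // eqxx.
by rewrite iy /= nth_index // eqxx orbT.
Qed.

Definition position (x : 'I_n) : nat := index x (path_order (pblock Q x)).

Definition path_succ (x : 'I_n) : 'I_n := nth x (path_order (pblock Q x)) (position x).+1.

Definition last_vertices : {set 'I_n} :=
  [set x in W | (size (path_order (pblock Q x)) <= (position x).+1)%N].

(* a block has only one last vertex *)
Lemma card_last_vertices : (#|last_vertices| <= #|Q|)%N.
Proof.
rewrite -(card_in_imset (f := pblock Q)); last first.
  move=> x y; rewrite !inE => /andP[xW xL] /andP[yW yL] E.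
  have [_ _ xs] := block_of_vertex xW; have [_ _ ys] := block_of_vertex yW.
  move: yL ys; rewrite /position -E => yL ys.
  set p := path_order _ in xs ys xL yL *.
  have ix : (index x p < size p)%N by rewrite index_mem.
  have iy : (index y p < size p)%N by rewrite index_mem.
  have ie : index x p = index y p.
    apply/eqP; rewrite eqn_leq -ltnS (leq_trans ix yL) -ltnS (leq_trans iy xL) //.
  by rewrite -(nth_index x xs) -(nth_index x ys) ie.
apply: subset_leq_card; apply/subsetP => B /imsetP[x]; rewrite inE => /andP[xW _] ->.
by case: (block_of_vertex xW).
Qed.

Lemma inner_vertex x : x \in W -> x \notin last_vertices ->
  [/\ path_succ x \in pblock Q x, pblock Q (path_succ x) = pblock Q x &
      position (path_succ x) = (position x).+1].
Proof.
move=> xW xL; have [xQ xB xs] := block_of_vertex xW.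
have [U memE _] := path_orderP (path_cover_paths xQ).
have lt : ((position x).+1 < size (path_order (pblock Q x)))%N.
  by move: xL; rewrite inE xW /= -ltnNge.
have nxB : path_succ x \in pblock Q x by rewrite memE; apply: mem_nth.
have tQ : trivIset Q by case/and3P: path_cover_partition.
have Pnx := def_pblock tQ xQ nxB; split=> //.
by rewrite /position Pnx index_uniq.
Qed.

(* a vertex which is not last is mapped injectively to the edge towards its
   successor *)
Lemma card_inner_vertices : (#|W :\: last_vertices| <= #|cover_edges Q|)%N.
Proof.
rewrite -(card_in_imset (f := fun x => [set x; path_succ x])); last first.
  move=> x y; rewrite !in_setD => /andP[xL xW] /andP[yL yW] E.
  have [_ nxP nxI] := inner_vertex xW xL; have [_ nyP nyI] := inner_vertex yW yL.
  have [//|xy] := eqVneq x y.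
  have : x \in [set y; path_succ y] by rewrite -E !inE eqxx.
  rewrite !inE (negbTE xy) /= => /eqP xe.
  have : y \in [set x; path_succ x] by rewrite E !inE eqxx.
  rewrite !inE eq_sym (negbTE xy) /= => /eqP ye.
  have : position x = (position x).+2 by rewrite {1}xe nyI ye nxI.
  by lia.
apply: subset_leq_card; apply/subsetP => f /imsetP[x]; rewrite in_setD => /andP[xL xW] ->.
have [xQ xB _] := block_of_vertex xW; have [nxB nxP nxI] := inner_vertex xW xL.
have [_ memE adj] := path_orderP (path_cover_paths xQ).
rewrite inE; apply/exists_inP; exists (pblock Q x) => //; apply/exists_inP; exists x => //.
apply/exists_inP; exists (path_succ x) => //; rewrite eqxx /= adj //.
by move: nxI; rewrite /position nxP => ->; rewrite eqxx.
Qed.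

Lemma card_cover_edges : (#|W| <= #|Q| + #|cover_edges Q|)%N.
Proof.
rewrite -(cardsID last_vertices W); apply: leq_add; last exact: card_inner_vertices.
by apply: leq_trans card_last_vertices; apply: subset_leq_card; apply: subsetIr.
Qed.

End CoverCount.
End PathCovers.

Lemma nullity_add_edges (R : fieldType) (n : nat) (e : rel 'I_n) (M : 'M[R]_n)
    (U : {set 'I_n}) (F : {set {set 'I_n}}) :
  is_forest e -> has_pattern e M -> kernel_trivial U M ->
  edges_within e F (~: U) -> max_degree2 F -> (nullity M + #|F| <= #|~: U|)%N.
Proof.
case=> e_sym e_irr no_cycle M_pat iU hF hdeg; rewrite -setTD in hF *.
have adm : admissible e setT U M F by split; rewrite ?subsetT.
have [Z cZ detZ] := kernel_bound_admissible e_sym e_irr no_cycle adm.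
by apply: leq_trans cZ; rewrite leq_add2r; apply: nullity_le_determining.
Qed.

Unset Implicit Arguments.

Theorem mainTheorem8 (R : realFieldType) (n : nat) (e : rel 'I_n)
    (A : 'M[R]_n) (c : nat) (Ts : 'I_c -> {set 'I_n}) :
  is_forest e ->
  in_RT e A ->
  (1 <= c)%N ->
  (forall i, is_subtree e (Ts i)) ->
  (forall i j, i != j -> independent e (Ts i) (Ts j)) ->
  (forall i, principal_submx A (Ts i) \in unitmx) ->
  (nullity A <= path_cover_number e (~: \bigcup_(i < c) Ts i))%N.
Proof.
move=> forest [A_pat _] _ _ ind inv.
have iU := kernel_trivial_blocks A_pat ind inv.
apply: (big_ind (fun m => nullity A <= m)%N) => [|a b ha hb|Q hQ].
- have := nullity_add_edges forest A_pat iU (F := set0) _ _; rewrite cards0 addn0.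
  apply; first by move=> f; rewrite inE.
  move=> x; suff -> : [set f in (set0 : {set {set 'I_n}}) | x \in f] = set0 by rewrite cards0.
  by apply/setP => f; rewrite !inE.
- by rewrite leq_min ha hb.
- have Fbound := nullity_add_edges forest A_pat iU (cover_edges_within (path_cover_partition hQ))
    (cover_edges_degree hQ).
  rewrite -(leq_add2r #|cover_edges e Q|); exact: leq_trans Fbound (card_cover_edges hQ).
Qed.
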